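(* Every transitive compact dynamical system $(X,T)$ is Li-Yorke chaotic.
   Context: A dynamical system $(X,T)$: $X$ is a compact metric space (metric $d$) with more than one point and without isolated points, $T:X\to X$ a continuous surjection. ''Opene'' means open and nonempty. $N_T(U,V)=\{n\in\mathbb{Z}_+:U\cap T^{-n}V\neq\varnothing\}$; $\mathcal{N}_T$ is the family of all subsets of $\mathbb{Z}_+$ containing some $N_T(U,V)$ with $U,V$ opene; $\omega_{\mathcal{N}_T}(x)=\bigcap_{F\in\mathcal{N}_T}\overline{\{T^ix:i\in F\}}$; $(X,T)$ is transitive compact if $\omega_{\mathcal{N}_T}(x)\neq\varnothing$ for all $x\in X$. A pair $(x,y)$ is proximal if $\liminf_{n\to\infty}d(T^nx,T^ny)=0$ and asymptotic if $\lim_{n\to\infty}d(T^nx,T^ny)=0$. $(X,T)$ is Li-Yorke chaotic if there exists an uncountable set $S\subset X$ such that every pair $(x,y)\in S\times S$ with $x\neq y$ is proximal but not asymptotic. *)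

From HB Require Import structures.
From mathcomp Require Import all_boot all_order all_algebra.
From mathcomp Require Import all_classical all_reals all_analysis.
Set Implicit Arguments. Unset Strict Implicit. Unset Printing Implicit Defensive.
Import Order.TTheory GRing.Theory Num.Theory numFieldTopology.Exports.
Local Open Scope classical_set_scope.
Local Open Scope ring_scope.

Definition opene {Y : topologicalType} (U : set Y) := open U /\ U !=set0.

Definition hitting_times {Y : Type} (T : Y -> Y) (U V : set Y) : set nat :=
  [set n | U `&` (iter n T @^-1` V) !=set0].

Definition hitting_family {Y : topologicalType} (T : Y -> Y) : set (set nat) :=
  [set F | exists U V, [/\ opene U, opene V & hitting_times T U V `<=` F]].

Definition omega_NT {Y : topologicalType} (T : Y -> Y) (x : Y) : set Y :=
  \bigcap_(F in hitting_family T) closure [set iter i T x | i in F].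

Definition transitive_compact {Y : topologicalType} (T : Y -> Y) :=
  forall x, omega_NT T x !=set0.

Definition proximal {R : realType} {X : metricType R} (T : X -> X) (x y : X) :=
  limn_einf (fun n => (mdist (iter n T x) (iter n T y))%:E) = 0%E.

Definition asymptotic {R : realType} {X : metricType R} (T : X -> X) (x y : X) :=
  (fun n => mdist (iter n T x) (iter n T y)) @ \oo --> (0 : R).

Definition LiYorke_chaotic {R : realType} {X : metricType R} (T : X -> X) :=
  exists S : set X, ~ countable S /\
    forall x y, S x -> S y -> x <> y -> proximal T x y /\ ~ asymptotic T x y.

From HB Require Import structures.
From mathcomp Require Import all_boot all_order all_algebra.
From mathcomp Require Import all_classical all_reals all_analysis.
From mathcomp Require Import lra.
Import Order.TTheory GRing.Theory Num.Theory numFieldTopology.Exports.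
Local Open Scope classical_set_scope.
Local Open Scope ring_scope.

(* By Zorn's lemma there is a maximal scrambled set, so it suffices to extend
   every countable scrambled set S by one point. For s in S the points y whose
   orbit comes within 1/(k+1) of the orbit of s after time k, those whose orbit
   gets farther than a fixed d > 0 from it after time k, and those y <> s, form
   open dense sets: density comes from a point z of omega_{N_T}(s), near
   which the orbit of s returns at hitting times of any opene B into any ball,
   so the orbits of s and of some y in B can be steered independently. The
   compact metric space X is a Baire space, so some y lies in all these
   countably many sets, and S together with y is still scrambled. *)

Section MetricBaire.
Context {R : realType} {X : metricType R}.

Lemma open_mball (x : X) (e : R) : open (ball x e).
Proof.
rewrite openE => y; rewrite /interior ballEmdist /= => dxy.
apply/nbhs_ballP; exists (e - mdist x y); first by rewrite /=; lra.
move=> w; rewrite ballEmdist /= => dyw.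
have := metric_triangle x y w; lra.
Qed.

Lemma open_mdist_gt (x : X) (e : R) : open [set y | e < mdist x y].
Proof.
rewrite openE => y; rewrite /interior /= => dxy.
apply/nbhs_ballP; exists (mdist x y - e); first by rewrite /=; lra.
move=> w; rewrite ballEmdist /= => dyw.
have := metric_triangle x w y; rewrite (metric_sym w y); lra.
Qed.

Lemma open_setC1 (x : X) : open (~` [set x]).
Proof.
by rewrite openC; exact/accessible_closed_set1/hausdorff_accessible/metric_hausdorff.
Qed.

Lemma dense_setC1 (x : X) : ~ isolated [set: X] x -> dense (~` [set x]).
Proof.
move=> xNiso A [a Aa] oA; apply: contrapT => A_sub_x.
have Ax w : A w -> w = x by move=> Aw; apply: contrapT => wx; apply: A_sub_x; exists w.
apply: xNiso; split; first by rewrite in_setT.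
exists A; first by rewrite -(Ax _ Aa); exact: open_nbhs_nbhs.
apply/seteqP; split=> [w [/Ax ->]//|w ->]; split=> //.
by rewrite -(Ax _ Aa).
Qed.

Lemma far_point (a b c : X) : exists w, mdist a b <= 2 * mdist c w.
Proof.
have [h|h] := lerP (mdist a b) (2 * mdist c a); first by exists a.
exists b; have := metric_triangle a c b; rewrite (metric_sym a c); lra.
Qed.

Lemma dense_shrink_ball (U : set X) (p : X) (r : R) : open U -> dense U -> 0 < r ->
  exists q (r' : {posnum R}), ball q (2 * r'%:num) `<=` ball p r `&` U.
Proof.
move=> oU dU r0.
have [w [pw Uw]] := dU _ (ex_intro _ p (ballxx p r0)) (open_mball p r).
have oI : open (ball p r `&` U) by exact: openI (open_mball p r) oU.
have /nbhs_ballP[e /= e0 sub] := open_nbhs_nbhs (conj oI (conj pw Uw)).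
have e20 : 0 < e / 2 by lra.
by exists w, (PosNum e20); apply: subset_trans sub; apply: le_ball; rewrite /=; lra.
Qed.

Lemma compact_Baire (x0 : X) (U : nat -> set X) : compact [set: X] ->
  (forall n, open (U n)) -> (forall n, dense (U n)) -> exists y, forall n, U n y.
Proof.
move=> cX oU dU.
have step (npr : nat * (X * {posnum R})) : exists qr : X * {posnum R},
    ball qr.1 (2 * qr.2%:num) `<=` ball npr.2.1 npr.2.2%:num `&` U npr.1.
  case: npr => n [p r].
  have [q [r' sub]] := dense_shrink_ball (U n) p r%:num (oU n) (dU n) [gt0 of r%:num].
  by exists (q, r').
have [g gP] := choice step.
pose c := fix c (n : nat) : X * {posnum R} :=
  if n is m.+1 then g (m, c m) else (x0, PosNum ltr01).
have nest n :
    ball (c n.+1).1 (2 * (c n.+1).2%:num) `<=` ball (c n).1 (c n).2%:num `&` U n.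
  exact: (gP (n, c n)).
have shrink m n : (n <= m)%N -> ball (c m).1 (c m).2%:num `<=` ball (c n).1 (c n).2%:num.
  elim: m => [|m IH]; first by rewrite leqn0 => /eqP ->.
  rewrite leq_eqVlt => /orP[/eqP -> //|/IH sub w cw]; apply: sub.
  have [] // := nest m w; apply: le_ball cw.
  by have := [gt0 of (c m.+1).2%:num]; lra.
have [y [_ cly]] := cX ((fun m => (c m).1) @ \oo) _ filterT.
exists y => n.
have tail : ((fun m => (c m).1) @ \oo) (ball (c n.+1).1 (c n.+1).2%:num).
  by exists n.+1 => // m /= nm; apply: shrink nm _ (ballxx _ _).
have [w [cw yw]] := cly _ _ tail (nbhsx_ballx y _ [gt0 of (c n.+1).2%:num]).
have := nest n y; case=> //.
have -> : 2 * (c n.+1).2%:num = (c n.+1).2%:num + (c n.+1).2%:num by lra.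
exact: ball_triangle cw (ball_sym yw).
Qed.

Lemma compact_Baire_countable (x0 : X) (I : Type) (D : set I) (U : I -> set X) :
  compact [set: X] -> countable D -> (forall i, D i -> open (U i) /\ dense (U i)) ->
  exists y, forall i, D i -> U i y.
Proof.
move=> cX /countable_injP[f finj] oUdU.
(* As f is injective on D, each V n is either some U i or the whole space. *)
pose V n := [set y | forall i, D i -> f i = n -> U i y].
have oVdV n : open (V n) /\ dense (V n).
  have [[i [Di fi]]|noi] := pselect (exists i, D i /\ f i = n).
    have -> : V n = U i.
      apply/seteqP; split=> [y /(_ i Di fi)//|y Uy j Dj fj].
      by rewrite (finj j i) ?inE // fi fj.
    exact: oUdU.
  have -> : V n = setT.
    by apply/seteqP; split=> // y _ i Di fi; exfalso; apply: noi; exists i.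
  by split; [exact: openT|move=> A [a Aa] _; exists a].
have [y Vy] := compact_Baire x0 V cX (fun n => (oVdV n).1) (fun n => (oVdV n).2).
by exists y => i Di; exact: Vy.
Qed.

End MetricBaire.

Section Dynamics.
Context {R : realType} {X : metricType R}.
Variable T : X -> X.
Hypothesis T_cont : continuous T.
Hypothesis T_surj : forall y, exists x, T x = y.

Lemma continuous_iter n : continuous (iter n T).
Proof.
elim: n => [|n IH] x /=; first exact: cvg_id.
exact: continuous_comp (IH x) (T_cont _).
Qed.

Lemma iter_surj n y : exists x, iter n T x = y.
Proof.
elim: n y => [|n IH] y; first by exists y.
have [w <-] := T_surj y; have [x <-] := IH w; by exists x.
Qed.

Lemma open_iter_preimage n (A : set X) : open A -> open (iter n T @^-1` A).
Proof. exact: (continuousP _).1 (@continuous_iter n) A. Qed.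

Lemma opene_iter_preimage_ball n (c : X) (r : R) : 0 < r ->
  opene (iter n T @^-1` ball c r).
Proof.
move=> r0; split; first exact/open_iter_preimage/open_mball.
have [w wc] := iter_surj n c; exists w; rewrite /= wc; exact: ballxx.
Qed.

Lemma omega_NT_visit {s z : X} k (c : X) {r : R} {B : set X} :
  omega_NT T s z -> 0 < r -> opene B ->
  exists i y, [/\ B y, ball (iter k T z) r (iter (k + i) T s)
                     & ball c r (iter (k + i) T y)].
Proof.
move=> zs r0 oB.
pose V := iter k T @^-1` ball c r.
pose W := iter k T @^-1` ball (iter k T z) r.
have hitBV : hitting_family T (hitting_times T B V).
  by exists B, V; split => //; exact: opene_iter_preimage_ball.
have nW : nbhs z W.
  apply: open_nbhs_nbhs; split; first exact/open_iter_preimage/open_mball.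
  exact: ballxx.
have [_ [[i BVi <-] Wi]] := zs _ hitBV W nW.
have [y [By Vy]] := BVi.
by exists i, y; rewrite !iterD.
Qed.

Definition close_after (s : X) k := [set y | exists2 n, (k <= n)%N &
  mdist (iter n T s) (iter n T y) < k.+1%:R^-1].

Definition apart_after (d : R) (s : X) k := [set y | exists2 n, (k <= n)%N &
  d < mdist (iter n T s) (iter n T y)].

Lemma open_close_after s k : open (close_after s k).
Proof.
rewrite openE => y [n kn dn].
have : nbhs y (iter n T @^-1` ball (iter n T s) k.+1%:R^-1).
  apply: open_nbhs_nbhs; split; first exact/open_iter_preimage/open_mball.
  by rewrite /= ballEmdist.
by apply: filterS => w /=; rewrite ballEmdist => ?; exists n.
Qed.

Lemma open_apart_after d s k : open (apart_after d s k).
Proof.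
rewrite openE => y [n kn dn].
have : nbhs y (iter n T @^-1` [set w | d < mdist (iter n T s) w]).
  by apply: open_nbhs_nbhs; split; first exact/open_iter_preimage/open_mdist_gt.
by apply: filterS => w /= ?; exists n.
Qed.

Lemma proximal_close_after s y : (forall k, close_after s k y) -> proximal T s y.
Proof.
move=> close; rewrite /proximal limn_einf_lim.
set u := fun n => _.
suff -> : einfs u = fun _ => 0%E by exact: lim_cst.
apply/funext => n; apply/eqP; rewrite eq_le; apply/andP; split.
- apply/lee_addgt0Pr => e e0; rewrite add0e.
  have [k0 _ k0e] := near_infty_natSinv_lt (PosNum e0).
  have [m km dm] := close (maxn n k0).
  apply: ge_ereal_inf; exists (u m).
    by exists m => //=; exact: leq_trans (leq_maxl _ _) km.
  rewrite lee_fin; apply/ltW/(lt_trans dm)/k0e.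
  by rewrite /= leq_maxr.
- by apply: le_ereal_inf_tmp => _ [m _ <-]; rewrite lee_fin; exact: mdist_ge0.
Qed.

Lemma not_asymptotic_apart_after d s y : 0 < d ->
  (forall k, apart_after d s k y) -> ~ asymptotic T s y.
Proof.
move=> d0 apart /cvgrPdist_lt /(_ d d0) [N _ nearN].
have [m Nm dm] := apart N.
have := nearN m Nm; rewrite /= sub0r normrN ger0_norm ?mdist_ge0 //.
lra.
Qed.

Lemma proximal_sym x y : proximal T x y -> proximal T y x.
Proof. by rewrite /proximal; under eq_fun do rewrite metric_sym. Qed.

Lemma asymptotic_sym x y : asymptotic T x y -> asymptotic T y x.
Proof. by rewrite /asymptotic; under eq_fun do rewrite metric_sym. Qed.

Definition scrambled (S : set X) := forall x y, S x -> S y -> x <> y ->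
  proximal T x y /\ ~ asymptotic T x y.

Lemma scrambled_bigcup (F : set (set X)) : F `<=` scrambled ->
  total_on F subset -> scrambled (\bigcup_(S in F) S).
Proof.
move=> Fscr Ftot x y [A FA Ax] [B FB By] xy.
have [AB|BA] := Ftot A B FA FB.
- exact: Fscr B FB x y (AB _ Ax) By xy.
- exact: Fscr A FA x y Ax (BA _ By) xy.
Qed.

Lemma scrambled_setU1 (S : set X) y : scrambled S ->
  (forall s, S s -> s <> y -> proximal T s y /\ ~ asymptotic T s y) ->
  scrambled (S `|` [set y]).
Proof.
move=> Sscr Sy x z [Sx|->] [Sz|->] xz.
- exact: Sscr.
- exact: Sy.
- have [pzy nazy] := Sy z Sz (nesym xz).
  by split; [exact: proximal_sym|move/asymptotic_sym].
- by [].
Qed.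

Hypothesis T_tc : transitive_compact T.

Lemma dense_close_after s k : dense (close_after s k).
Proof.
move=> B B0 oB; have [z zs] := T_tc s.
pose e : R := k.+1%:R^-1.
have e0 : 0 < e / 2 by rewrite divr_gt0 // invr_gt0 ltr0n.
have [i [y [By]]] := omega_NT_visit k (iter k T z) zs e0 (conj oB B0).
rewrite !ballEmdist /= => zs_near zy_near.
exists y; split => //; exists (k + i)%N; first exact: leq_addr.
have := metric_triangle (iter (k + i) T s) (iter k T z) (iter (k + i) T y).
by rewrite (metric_sym _ (iter k T z)) -/e; lra.
Qed.

Lemma dense_apart_after (a b : X) d s k : 0 < d -> 4 * d <= mdist a b ->
  dense (apart_after d s k).
Proof.
move=> d0 dab B B0 oB; have [z zs] := T_tc s.
have [c zc] := far_point a b (iter k T z).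
have d20 : 0 < d / 2 by lra.
have [i [y [By]]] := omega_NT_visit k c zs d20 (conj oB B0).
rewrite !ballEmdist /= => zs_near cy_near.
exists y; split => //; exists (k + i)%N; first exact: leq_addr.
have := metric_triangle (iter k T z) (iter (k + i) T s) c.
have := metric_triangle (iter (k + i) T s) (iter (k + i) T y) c.
by rewrite (metric_sym (iter (k + i) T y) c); lra.
Qed.

Lemma countable_scrambled_extension {a b : X} {S : set X} : compact [set: X] ->
  (forall x : X, ~ isolated [set: X] x) -> a <> b -> countable S ->
  exists y, ~ S y /\ forall s, S s -> proximal T s y /\ ~ asymptotic T s y.
Proof.
move=> cX Xperf ab Sc.
pose d := mdist a b / 4.
have d0 : 0 < d by rewrite /d divr_gt0 // mdist_gt0; apply/eqP.
pose U (sk : X * nat) :=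
  close_after sk.1 sk.2 `&` apart_after d sk.1 sk.2 `&` ~` [set sk.1].
have SNc : countable (S `*` [set: nat]) by exact: countableX Sc (countableP _).
have [|y Uy] := @compact_Baire_countable _ _ a _ _ U cX SNc.
  move=> [s k] _; split.
    apply: openI (open_setC1 s).
    exact: openI (open_close_after _ _) (open_apart_after _ _ _).
  apply: denseI; last exact: dense_setC1 (Xperf s).
    exact: openI (open_close_after _ _) (open_apart_after _ _ _).
  apply: denseI; [exact: open_close_after|exact: dense_close_after|].
  by apply: (@dense_apart_after a b d s k d0); rewrite /d; lra.
exists y; split; first by move=> Sy; have [_] := Uy (y, 0%N) (conj Sy I); apply.
move=> s Ss; split.
- by apply: proximal_close_after => k; have [[]] := Uy (s, k) (conj Ss I).
- apply: (@not_asymptotic_apart_after d s y d0) => k.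
  by have [[]] := Uy (s, k) (conj Ss I).
Qed.

End Dynamics.

Theorem proposition6p6 (R : realType) (X : metricType R) (T : X -> X) :
  compact [set: X] ->
  (exists x y : X, x <> y) ->
  (forall x : X, ~ isolated [set: X] x) ->
  continuous T ->
  (forall y : X, exists x : X, T x = y) ->
  transitive_compact T ->
  LiYorke_chaotic T.
Proof.
move=> cX [a [b ab]] Xperf T_cont T_surj T_tc.
have [S [Sscr Smax]] := Zorn_bigcup (@scrambled_bigcup _ _ T).
exists S; split => // Sc.
have [y [Sy yLY]] := countable_scrambled_extension T T_cont T_surj T_tc cX Xperf ab Sc.
apply: (Smax (S `|` [set y])).
  by split; [move=> x Sx; left|move=> /(_ y (or_intror erefl))].
by apply: scrambled_setU1 => // s Ss _; exact: yLY.
Qed.
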